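(* For every fixed integer $K\ge 1$, \[ \sum_{k=0}^{m-2}\zeta(m-k,\{1\}_k)=\sum_{j=1}^{K}\binom{2j}{j}\frac{1}{j^{m}}+O\!\left((K+1)^{-m}\right)\qquad(m\to\infty), \] i.e. $\sum_{k=0}^{m-2}\zeta(m-k,\{1\}_k)\approx 2+\frac{6}{2^m}+\frac{20}{3^m}+\frac{70}{4^m}+\cdots$. In particular, the average of the $m-1$ numbers $\zeta(m),\zeta(m-1,1),\dots,\zeta(2,\{1\}_{m-2})$ is asymptotic to $2/m$ as $m\to\infty$.
   Context: For positive integers $s_1\ge 2, s_2,\dots,s_l$, the multiple zeta value is $\zeta(s_1,\dots,s_l):=\sum_{n_1>n_2>\cdots>n_l>0} n_1^{-s_1}\cdots n_l^{-s_l}$. The notation $\{1\}_k$ denotes the string $1,1,\dots,1$ ($k$ times); for $k=0$ it is empty. *)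

From Stdlib Require Import Reals List ClassicalEpsilon.
Open Scope R_scope.

Fixpoint sumR (f : nat -> R) (N : nat) : R :=
  match N with
  | O => 0
  | S N' => sumR f N' + f (S N')
  end.

(* Truncated multiple zeta sum:
   mzv_trunc [s1;...;sl] N = sum_{N >= n1 > n2 > ... > nl > 0} n1^-s1 ... nl^-sl *)
Fixpoint mzv_trunc (s : list nat) (N : nat) : R :=
  match s with
  | nil => 1
  | s1 :: rest => sumR (fun n => / (INR n ^ s1) * mzv_trunc rest (n - 1)) N
  end.

(* The multiple zeta value: the limit of the truncated sums as N -> oo
   (chosen by epsilon; it exists whenever s1 >= 2). *)
Definition mzv (s : list nat) : R :=
  epsilon (inhabits 0) (fun l => Un_cv (fun N => mzv_trunc s N) l).

Definition mzv_height_one_sum (m : nat) : R :=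
  sum_f_R0 (fun k => mzv ((m - k)%nat :: repeat 1%nat k)) (m - 2).

From Stdlib Require Import Reals List.
From Stdlib Require Import Lra Lia Factorial ClassicalEpsilon.
Open Scope R_scope.

(** Writing [e_k(n) = e_k(1, 1/2, ..., 1/n)], one has
    [zeta(s, {1}_k) = sum_n e_k(n-1) / n^s], so that a sum over [k <= L] of
    [zeta(m-k, {1}_k)] is [sum_n n^-m sum_(k<=L) n^k e_k(n-1)].  The inner sum
    is a truncation of [prod_(i<n) (1 + n/i) = binom(2n, n)/2], exact for
    [n <= L+1] and at most [n^(L+1)] otherwise.  For [L] about [m/2] this
    gives the expansion of a partial sum up to [O((K+1)^-m)].  The duality
    [zeta(j+2, {1}_i) = zeta(i+2, {1}_j)] folds the full sum into two such
    partial sums, whence the factor [2] in front of [binom(2j,j)/2]. *)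

Lemma sumR_S f N : sumR f (S N) = sumR f N + f (S N).
Proof. reflexivity. Qed.

Lemma sumR_ext f g N :
  (forall n, (1 <= n <= N)%nat -> f n = g n) -> sumR f N = sumR g N.
Proof.
  induction N as [|N IH]; intros H; simpl; [reflexivity|].
  rewrite IH, H; [reflexivity | lia | intros; apply H; lia].
Qed.

Lemma sumR_le f g N :
  (forall n, (1 <= n <= N)%nat -> f n <= g n) -> sumR f N <= sumR g N.
Proof.
  induction N as [|N IH]; intros H; simpl; [lra|].
  assert (f (S N) <= g (S N)) by (apply H; lia).
  assert (sumR f N <= sumR g N) by (apply IH; intros; apply H; lia).
  lra.
Qed.

Lemma sumR_plus f g N : sumR (fun n => f n + g n) N = sumR f N + sumR g N.
Proof. induction N; simpl; lra. Qed.

Lemma sumR_scal c f N : sumR (fun n => c * f n) N = c * sumR f N.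
Proof. induction N as [|N IH]; simpl; [|rewrite IH]; ring. Qed.

Lemma sumR_zero N : sumR (fun _ => 0) N = 0.
Proof. induction N as [|N IH]; simpl; [|rewrite IH]; ring. Qed.

Lemma sumR_nonneg f N : (forall n, (1 <= n <= N)%nat -> 0 <= f n) -> 0 <= sumR f N.
Proof. intros H. rewrite <- (sumR_zero N). apply sumR_le; auto. Qed.

Lemma sumR_mono f N M : (forall n, 0 <= f n) -> (N <= M)%nat -> sumR f N <= sumR f M.
Proof. intros H HNM; induction HNM; simpl; [lra|]. specialize (H (S m)); lra. Qed.

Lemma sumR_growing f : (forall n, 0 <= f n) -> Un_growing (sumR f).
Proof. intros H n; apply sumR_mono; auto. Qed.

Lemma sumR_split f K M : sumR f (K + M) = sumR f K + sumR (fun i => f (K + i)%nat) M.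
Proof.
  induction M as [|M IH]; [rewrite Nat.add_0_r; simpl; ring|].
  rewrite Nat.add_succ_r. change (sumR f (S (K + M))) with (sumR f (K + M) + f (S (K + M))).
  simpl. rewrite IH, Nat.add_succ_r. ring.
Qed.

Lemma sumR_tail_lb f N M b :
  (forall q, (N < q <= N + M)%nat -> b <= f q) -> INR M * b <= sumR f (N + M) - sumR f N.
Proof.
  induction M as [|M IH]; intros H; [rewrite Nat.add_0_r; simpl; lra|].
  rewrite Nat.add_succ_r, S_INR; simpl.
  assert (INR M * b <= sumR f (N + M) - sumR f N) by (apply IH; intros; apply H; lia).
  assert (b <= f (S (N + M))) by (apply H; lia).
  lra.
Qed.

Lemma sumR_swap (t : nat -> nat -> R) P Q :
  sumR (fun q => sumR (fun p => t p q) P) Q = sumR (fun p => sumR (fun q => t p q) Q) P.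
Proof.
  revert Q; induction P as [|P IH]; intros Q; simpl.
  - apply sumR_zero.
  - rewrite sumR_plus, IH. reflexivity.
Qed.

Lemma sum_f_R0_sumR_swap (t : nat -> nat -> R) L N :
  sum_f_R0 (fun k => sumR (fun n => t k n) N) L = sumR (fun n => sum_f_R0 (fun k => t k n) L) N.
Proof. induction L as [|L IH]; simpl; [reflexivity|]. rewrite IH, <- sumR_plus. reflexivity. Qed.

Lemma sum_f_R0_scal c f L : sum_f_R0 (fun k => c * f k) L = c * sum_f_R0 f L.
Proof. induction L as [|L IH]; simpl; [|rewrite IH]; ring. Qed.

Lemma sum_f_R0_term_le (f : nat -> R) k K :
  (k <= K)%nat -> (forall i, 0 <= f i) -> f k <= sum_f_R0 f K.
Proof.
  intros Hk Hf; induction Hk as [|K _ IH]; simpl.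
  - destruct k as [|k]; simpl; [lra|].
    assert (0 <= sum_f_R0 f k) by (apply cond_pos_sum; auto). lra.
  - specialize (Hf (S K)); lra.
Qed.

Lemma cv_const c : Un_cv (fun _ => c) c.
Proof. intros eps Heps; exists 0%nat; intros; unfold Rdist; rewrite Rminus_diag, Rabs_R0; auto. Qed.

Lemma cv_scal (u : nat -> R) l c : Un_cv u l -> Un_cv (fun N => c * u N) (c * l).
Proof. intros H. apply CV_mult; [apply cv_const | exact H]. Qed.

Lemma cv_eventually_eq (u v : nat -> R) l N :
  Un_cv u l -> (forall n, (N <= n)%nat -> u n = v n) -> Un_cv v l.
Proof.
  intros Hu H eps Heps. destruct (Hu eps Heps) as [N1 HN1].
  exists (Nat.max N N1). intros n Hn. rewrite <- H by lia. apply HN1; lia.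
Qed.

Lemma lim_ge_eventually (u : nat -> R) l a N :
  Un_cv u l -> (forall n, (N <= n)%nat -> a <= u n) -> a <= l.
Proof.
  intros Hu H. destruct (Rle_or_lt a l) as [|Hlt]; auto. exfalso.
  destruct (Hu (a - l)) as [N1 HN1]; [lra|].
  specialize (HN1 (Nat.max N N1) ltac:(lia)). specialize (H (Nat.max N N1) ltac:(lia)).
  unfold Rdist in HN1. apply Rabs_def2 in HN1. lra.
Qed.

Lemma lim_le (u : nat -> R) l b : Un_cv u l -> (forall n, u n <= b) -> l <= b.
Proof. intros Hu H. apply Rle_cv_lim with u (fun _ => b); auto. apply cv_const. Qed.

Lemma has_ub_of_le (u : nat -> R) B : (forall n, u n <= B) -> has_ub u.
Proof. intros H. exists B. intros x [i ->]. apply H. Qed.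

Lemma cv_sumR_finite (u : nat -> nat -> R) (l : nat -> R) Q :
  (forall q, Un_cv (u q) (l q)) -> Un_cv (fun P => sumR (fun q => u q P) Q) (sumR l Q).
Proof. intros H; induction Q; simpl; [apply cv_const | apply CV_plus; auto]. Qed.

Lemma cv_sum_f_R0_finite (u : nat -> nat -> R) (l : nat -> R) Q :
  (forall q, (q <= Q)%nat -> Un_cv (u q) (l q)) ->
  Un_cv (fun P => sum_f_R0 (fun q => u q P) Q) (sum_f_R0 l Q).
Proof. intros H; induction Q; simpl; [apply H; lia | apply CV_plus; auto]. Qed.

Lemma mzv_spec s l : Un_cv (mzv_trunc s) l -> mzv s = l.
Proof.
  intros H. unfold mzv. apply UL_sequence with (mzv_trunc s); auto.
  apply (epsilon_spec (inhabits 0) (fun l => Un_cv (fun N => mzv_trunc s N) l)). exists l; auto.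
Qed.

Section Tonelli.
Variable t : nat -> nat -> R.
Variables row col : nat -> R.
Hypothesis t_nonneg : forall p q, 0 <= t p q.
Hypothesis row_cv : forall p, Un_cv (sumR (t p)) (row p).
Hypothesis col_cv : forall q, Un_cv (sumR (fun p => t p q)) (col q).

Lemma row_nonneg p : 0 <= row p.
Proof. apply lim_ge_eventually with (sumR (t p)) 0%nat; auto. intros; apply sumR_nonneg; auto. Qed.

Lemma col_nonneg q : 0 <= col q.
Proof. apply lim_ge_eventually with (sumR (fun p => t p q)) 0%nat; auto. intros; apply sumR_nonneg; auto. Qed.

Lemma col_partial_le_total L : Un_cv (sumR row) L -> forall Q, sumR col Q <= L.
Proof.
  intros HL Q.
  apply Rle_cv_lim with (fun P => sumR (fun q => sumR (fun p => t p q) P) Q) (fun _ => L).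
  - intros P. rewrite sumR_swap. apply Rle_trans with (sumR row P).
    + apply sumR_le; intros p _. apply growing_ineq; auto. apply sumR_growing; auto.
    + apply growing_ineq; auto. apply sumR_growing, row_nonneg.
  - apply cv_sumR_finite, col_cv.
  - apply cv_const.
Qed.

End Tonelli.

Lemma tonelli (t : nat -> nat -> R) (row col : nat -> R) L :
  (forall p q, 0 <= t p q) ->
  (forall p, Un_cv (sumR (t p)) (row p)) ->
  (forall q, Un_cv (sumR (fun p => t p q)) (col q)) ->
  Un_cv (sumR row) L -> Un_cv (sumR col) L.
Proof.
  intros Ht Hrow Hcol HL.
  assert (Hle := col_partial_le_total t row col Ht Hrow Hcol L HL).
  destruct (growing_cv (sumR col)) as [L' HL'].
  - apply sumR_growing, (col_nonneg t col Ht Hcol).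
  - apply has_ub_of_le with L; auto.
  - assert (Hge := col_partial_le_total (fun q p => t p q) col row (fun q p => Ht p q)
                     Hcol Hrow L' HL').
    assert (L' <= L) by (apply lim_le with (sumR col); auto).
    assert (L <= L') by (apply lim_le with (sumR row); auto).
    replace L with L' by lra. exact HL'.
Qed.

(** Elementary facts on nonnegative reals (division by zero yields zero). *)

Lemma div_nonneg a b : 0 <= a -> 0 <= b -> 0 <= a / b.
Proof.
  intros Ha Hb. destruct (Req_dec b 0) as [->|Hb0].
  - unfold Rdiv; rewrite Rinv_0; lra.
  - apply Rmult_le_pos; auto. left; apply Rinv_0_lt_compat; lra.
Qed.

Lemma inv_nonneg b : 0 <= b -> 0 <= / b.
Proof. intros Hb. rewrite <- (Rmult_1_l (/ b)). apply div_nonneg; lra. Qed.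

Lemma inv_INR_pow_nonneg n m : 0 <= / INR n ^ m.
Proof. apply inv_nonneg, pow_le, pos_INR. Qed.

Lemma INR_S_pos n : 0 < INR (S n).
Proof. apply lt_0_INR; lia. Qed.

(** [esym k n] is the elementary symmetric function [e_k(1, 1/2, ..., 1/n)],
    i.e. the truncated multiple zeta sum of the string [{1}_k]. *)

Definition esym (k n : nat) : R := mzv_trunc (repeat 1%nat k) n.

Lemma esym_0 n : esym 0 n = 1.
Proof. reflexivity. Qed.

Lemma esym_S_0 k : esym (S k) 0 = 0.
Proof. reflexivity. Qed.

Lemma esym_S_S k n : esym (S k) (S n) = esym (S k) n + esym k n / INR (S n).
Proof. unfold esym; simpl. rewrite Nat.sub_0_r, Rmult_1_r. unfold Rdiv. ring. Qed.

Lemma esym_nonneg k n : 0 <= esym k n.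
Proof.
  revert k; induction n as [|n IH]; intros [|k];
    rewrite ?esym_0, ?esym_S_0; try lra.
  rewrite esym_S_S. specialize (IH k) as H1. specialize (IH (S k)) as H2.
  assert (0 <= esym k n / INR (S n)) by (apply div_nonneg; [lra | apply pos_INR]).
  lra.
Qed.

(** The generating polynomial of the [esym k N] is the product
    [hprod x N = (1 + x/1)(1 + x/2)...(1 + x/N)]. *)

Fixpoint hprod (x : R) (N : nat) : R :=
  match N with O => 1 | S N' => hprod x N' * (1 + x / INR (S N')) end.

Lemma hprod_S x N : hprod x (S N) = hprod x N * (1 + x / INR (S N)).
Proof. reflexivity. Qed.

Lemma hprod_ge1 x N : 0 <= x -> 1 <= hprod x N.
Proof.
  intros Hx; induction N as [|N IH]; [simpl; lra|]. rewrite hprod_S.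
  assert (0 <= x / INR (S N)) by (apply div_nonneg; [lra | apply pos_INR]).
  assert (0 <= hprod x N * (x / INR (S N))) by (apply Rmult_le_pos; lra).
  nra.
Qed.

Lemma hprod_nonneg x N : 0 <= x -> 0 <= hprod x N.
Proof. intros Hx; assert (H := hprod_ge1 x N Hx); lra. Qed.

Definition esym_gen (x : R) (N K : nat) : R := sum_f_R0 (fun k => x ^ k * esym k N) K.

Lemma esym_gen_0 x K : esym_gen x 0 K = 1.
Proof.
  unfold esym_gen; induction K as [|K IH]; simpl; [rewrite esym_0; ring|].
  rewrite IH, esym_S_0; ring.
Qed.

(* Pascal-type recursion: multiplying by [1 + x/(N+1)]. *)
Lemma esym_gen_S x N K :
  esym_gen x (S N) (S K) = esym_gen x N (S K) + x / INR (S N) * esym_gen x N K.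
Proof.
  assert (0 < INR (S N)) by apply INR_S_pos. unfold esym_gen.
  induction K as [|K IH]; cbn [sum_f_R0] in *.
  - rewrite !esym_0, esym_S_S, esym_0. cbn [pow]. field. lra.
  - rewrite IH, (esym_S_S (S K)). cbn [pow]. field. lra.
Qed.

Lemma esym_gen_le x N K : 0 <= x -> esym_gen x N K <= hprod x N.
Proof.
  intros Hx. revert K; induction N as [|N IH]; intros K.
  - rewrite esym_gen_0. simpl; lra.
  - assert (H := hprod_ge1 x (S N) Hx). destruct K as [|K].
    + unfold esym_gen; cbn [sum_f_R0 pow]. rewrite esym_0. lra.
    + rewrite esym_gen_S, hprod_S.
      assert (0 <= x / INR (S N)) by (apply div_nonneg; [lra | apply pos_INR]).
      assert (x / INR (S N) * esym_gen x N K <= x / INR (S N) * hprod x N)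
        by (apply Rmult_le_compat_l; auto).
      specialize (IH (S K)). nra.
Qed.

Lemma esym_gen_full x N K : (N <= K)%nat -> esym_gen x N K = hprod x N.
Proof.
  revert K; induction N as [|N IH]; intros K HK; [apply esym_gen_0|].
  destruct K as [|K]; [lia|].
  rewrite esym_gen_S, hprod_S, !IH by lia. ring.
Qed.

Lemma hprod_1 N : hprod 1 N = INR N + 1.
Proof.
  induction N as [|N IH]; [simpl; lra|].
  rewrite hprod_S, IH, S_INR. assert (0 <= INR N) by apply pos_INR. field. lra.
Qed.

(* Each [esym k N] is a coefficient of [hprod 1 N = N + 1]. *)
Lemma esym_le k N : esym k N <= INR N + 1.
Proof.
  rewrite <- hprod_1. eapply Rle_trans; [|apply (esym_gen_le 1 N k); lra].
  unfold esym_gen. replace (esym k N) with (1 ^ k * esym k N) by (rewrite pow1; ring).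
  apply (sum_f_R0_term_le (fun k => 1 ^ k * esym k N)); [lia|].
  intros; rewrite pow1, Rmult_1_l; apply esym_nonneg.
Qed.

Lemma hprod_fact n N : hprod (INR n) N * INR (fact N) * INR (fact n) = INR (fact (N + n)).
Proof.
  induction N as [|N IH]; [simpl; ring|].
  rewrite hprod_S. replace (S N + n)%nat with (S (N + n)) by lia.
  rewrite (fact_simpl (N + n)), (fact_simpl N), !mult_INR, <- IH.
  rewrite (S_INR (N + n)), S_INR, plus_INR.
  assert (0 <= INR N) by apply pos_INR. field. lra.
Qed.

Lemma hprod_central_binomial n : (1 <= n)%nat -> 2 * hprod (INR n) (n - 1) = C (2 * n) n.
Proof.
  intros Hn. destruct n as [|n']; [lia|]. replace (S n' - 1)%nat with n' by lia.
  unfold C. replace (2 * S n' - S n')%nat with (S n') by lia.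
  replace (2 * S n')%nat with (S (n' + S n')) by lia.
  rewrite fact_simpl, mult_INR, <- (hprod_fact (S n') n'), (fact_simpl n'), !mult_INR.
  assert (H1 := INR_fact_lt_0 n'). assert (H2 := INR_fact_lt_0 (S n')).
  assert (0 <= INR n') by apply pos_INR.
  rewrite !S_INR, plus_INR, S_INR. field. split; lra.
Qed.

(** A convergent series [sum_q x_q / q] forces [x_q] to drop below every
    positive level infinitely often, since the harmonic series diverges. *)
Lemma weighted_harmonic_level (x : nat -> R) L h N0 :
  Un_cv (sumR (fun q => x q / INR q)) L -> (forall q, (N0 <= q)%nat -> h <= x q) -> h <= 0.
Proof.
  intros HL Hx. destruct (Rle_or_lt h 0) as [|Hh]; auto. exfalso.
  set (Sx := sumR (fun q => x q / INR q)) in HL.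
  destruct (HL (h / 8)) as [N1 HN1]; [lra|].
  set (N := S (Nat.max N0 N1)).
  assert (HN : 0 < INR N) by (apply lt_0_INR; unfold N; lia).
  (* the block of terms from [N+1] to [2N] contributes at least [h/2] *)
  assert (Hblock : INR N * (h / INR (N + N)) <= Sx (N + N)%nat - Sx N).
  { apply sumR_tail_lb. intros q Hq.
    assert (0 < INR q) by (apply lt_0_INR; lia).
    assert (INR q <= INR (N + N)) by (apply le_INR; lia).
    assert (h <= x q) by (apply Hx; unfold N in Hq; lia).
    unfold Rdiv. apply Rle_trans with (h * / INR q).
    - apply Rmult_le_compat_l; [lra | apply Rinv_le_contravar; lra].
    - apply Rmult_le_compat_r; [left; apply Rinv_0_lt_compat|]; lra. }
  assert (INR N * (h / INR (N + N)) = h / 2) by (rewrite plus_INR; field; lra).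
  assert (A1 := HN1 (N + N)%nat ltac:(unfold N; lia)).
  assert (A2 := HN1 N ltac:(unfold N; lia)).
  unfold Rdist in A1, A2. apply Rabs_def2 in A1. apply Rabs_def2 in A2. lra.
Qed.

Lemma balanced_series_limit (x y A : nat -> R) (a p d : R) :
  0 < p -> 0 < d ->
  (forall n, 0 <= x n) -> (forall n, 0 <= y n) -> (forall n, d * y n <= x (S n)) ->
  Un_cv A a -> (forall n, A n <= a) ->
  (forall N, p * sumR (fun q => x q / INR q) N + y N = A N) ->
  Un_cv (sumR (fun q => x q / INR q)) (a / p).
Proof.
  intros Hp Hd Hx Hy Hxy HA HAa Hbal.
  set (Sx := sumR (fun q => x q / INR q)) in *.
  destruct (growing_cv Sx) as [L HL].
  { apply sumR_growing. intros; apply div_nonneg; auto; apply pos_INR. }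
  { apply has_ub_of_le with (a / p). intros n.
    specialize (Hbal n); specialize (HAa n); specialize (Hy n).
    apply Rmult_le_reg_l with p; auto. field_simplify; lra. }
  set (c := a - p * L).
  assert (Hyc : Un_cv y c).
  { apply Un_cv_ext with (fun n => A n - p * Sx n).
    - intros n. specialize (Hbal n). lra.
    - apply CV_minus; [exact HA | apply cv_scal, HL]. }
  assert (Hc0 : 0 <= c) by (apply lim_ge_eventually with y 0%nat; auto).
  destruct (Rle_lt_or_eq_dec _ _ Hc0) as [Hcp|Hc].
  - (* a positive remainder keeps [x] above [d c / 2], contradicting convergence *)
    exfalso. destruct (Hyc (c / 2)) as [N1 HN1]; [lra|].
    assert (Hlev : d * (c / 2) <= 0).
    { apply (weighted_harmonic_level x L _ (S N1) HL). intros q Hq.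
      destruct q as [|q]; [lia|]. specialize (HN1 q ltac:(lia)).
      unfold Rdist in HN1. apply Rabs_def2 in HN1. specialize (Hxy q).
      assert (d * (c / 2) <= d * y q) by (apply Rmult_le_compat_l; lra). lra. }
    nra.
  - replace (a / p) with L; auto. unfold c in Hc. replace a with (p * L) by lra. field. lra.
Qed.

(** The numbers [beta p q = p! q! / (p+q)!], the inverse binomial
    coefficients; they are the discrete analogue of the Beta integral. *)

Definition beta (p q : nat) : R := INR (fact p) * INR (fact q) / INR (fact (p + q)).

Lemma beta_0 p : beta p 0 = 1.
Proof. unfold beta. rewrite Nat.add_0_r. simpl. field. apply INR_fact_neq_0. Qed.

Lemma beta_pos p q : 0 < beta p q.
Proof.
  unfold beta. apply Rdiv_lt_0_compat; [apply Rmult_lt_0_compat|]; apply INR_fact_lt_0.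
Qed.

Lemma beta_sym p q : beta p q = beta q p.
Proof. unfold beta. rewrite Nat.add_comm. unfold Rdiv; ring. Qed.

Lemma beta_S p q : beta p (S q) = beta p q * INR (S q) / INR (S (p + q)).
Proof.
  unfold beta. rewrite Nat.add_succ_r, (fact_simpl q), (fact_simpl (p + q)), !mult_INR.
  assert (H1 := INR_fact_lt_0 q). assert (H2 := INR_fact_lt_0 (p + q)).
  assert (0 < INR (S (p + q))) by apply INR_S_pos. field. lra.
Qed.

(* Telescoping identity behind the recursions for [beta_series] below. *)
Lemma beta_step p q : INR p * (beta p (S q) / INR (S q)) = beta p q - beta p (S q).
Proof.
  rewrite beta_S, (S_INR (p + q)), plus_INR, (S_INR q).
  assert (0 <= INR p) by apply pos_INR. assert (0 <= INR q) by apply pos_INR.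
  field. lra.
Qed.

Lemma beta_S_lower p q : beta p q / (INR p + 1) <= beta p (S q).
Proof.
  rewrite beta_S, (S_INR (p + q)), plus_INR, (S_INR q).
  assert (0 <= INR p) by apply pos_INR. assert (0 <= INR q) by apply pos_INR.
  assert (HC := beta_pos p q).
  apply Rmult_le_reg_r with ((INR p + 1) * (INR p + INR q + 1)); [nra|].
  replace (beta p q / (INR p + 1) * ((INR p + 1) * (INR p + INR q + 1)))
    with (beta p q * (INR p + INR q + 1)) by (field; lra).
  replace (beta p q * (INR q + 1) / (INR p + INR q + 1) * ((INR p + 1) * (INR p + INR q + 1)))
    with (beta p q * ((INR q + 1) * (INR p + 1))) by (field; lra).
  apply Rmult_le_compat_l; nra.
Qed.

Definition beta_series (j p N : nat) : R :=
  sumR (fun q => esym j (q - 1) * beta p q / INR q) N.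

Lemma beta_series_0_balance p N : INR p * beta_series 0 p N + beta p N = 1.
Proof.
  unfold beta_series; induction N as [|N IH]; simpl sumR.
  - rewrite beta_0. ring.
  - rewrite esym_0, Rmult_1_l, Rmult_plus_distr_l, beta_step. lra.
Qed.

Lemma beta_series_S_balance j p N :
  INR p * beta_series (S j) p N + esym (S j) N * beta p N = beta_series j p N.
Proof.
  unfold beta_series; induction N as [|N IH]; [simpl; rewrite esym_S_0; ring|].
  rewrite !sumR_S, Nat.sub_succ, Nat.sub_0_r, esym_S_S, Rmult_plus_distr_l.
    replace (INR p * (esym (S j) N * beta p (S N) / INR (S N)))
      with (esym (S j) N * (INR p * (beta p (S N) / INR (S N)))) by (unfold Rdiv; ring).
    rewrite beta_step, <- IH. field. apply Rgt_not_eq, INR_S_pos.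
Qed.

Lemma beta_series_growing j p : Un_growing (beta_series j p).
Proof.
  apply sumR_growing. intros n. apply div_nonneg; [|apply pos_INR].
  apply Rmult_le_pos; [apply esym_nonneg | left; apply beta_pos].
Qed.

Lemma beta_series_cv j p : (1 <= p)%nat -> Un_cv (beta_series j p) (/ INR p ^ S j).
Proof.
  intros Hp. assert (Hp' : 1 <= INR p) by (apply (le_INR 1); auto).
  assert (Hd : 0 < / (INR p + 1)) by (apply Rinv_0_lt_compat; lra).
  assert (Hx : forall i k n, 0 <= esym i k * beta p n)
    by (intros; apply Rmult_le_pos; [apply esym_nonneg | left; apply beta_pos]).
  assert (Hnext : forall i n, / (INR p + 1) * (esym i n * beta p n)
                              <= esym i (S n - 1) * beta p (S n)).
  { intros i n. rewrite Nat.sub_succ, Nat.sub_0_r.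
    assert (H := beta_S_lower p n). assert (0 <= esym i n) by apply esym_nonneg.
    replace (/ (INR p + 1) * (esym i n * beta p n)) with (esym i n * (beta p n / (INR p + 1)))
      by (unfold Rdiv; ring).
    apply Rmult_le_compat_l; auto. }
  induction j as [|j IH].
  - replace (/ INR p ^ 1) with (1 / INR p) by (simpl; field; lra).
    apply (balanced_series_limit _ (fun N => esym 0 N * beta p N) (fun _ => 1) 1 (INR p)
             (/ (INR p + 1))); try lra; try (intros; apply Hx); try apply Hnext.
    + apply cv_const.
    + intros; lra.
    + intros N. rewrite esym_0, Rmult_1_l. apply beta_series_0_balance.
  - replace (/ INR p ^ S (S j)) with (/ INR p ^ S j / INR p)
      by (cbn [pow]; field; split; [apply pow_nonzero|]; lra).
    apply (balanced_series_limit _ (fun N => esym (S j) N * beta p N) (beta_series j p)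
             (/ INR p ^ S j) (INR p) (/ (INR p + 1))); try lra; try (intros; apply Hx);
      try apply Hnext; auto.
    + intros n; apply growing_ineq; auto. apply beta_series_growing.
    + intros N. apply beta_series_S_balance.
Qed.

Lemma mzv_trunc_height_one s k N :
  mzv_trunc (s :: repeat 1%nat k) N = sumR (fun n => / INR n ^ s * esym k (n - 1)) N.
Proof. reflexivity. Qed.

Lemma inv_sq_sum_S N : sumR (fun n => / INR n ^ 2) (S N) <= 2 - / INR (S N).
Proof.
  induction N as [|N IH]; [simpl; rewrite Rmult_1_r, Rinv_1; lra|].
  rewrite sumR_S. assert (H0 : 0 < INR (S N)) by apply INR_S_pos.
  assert (H1 : INR (S (S N)) = INR (S N) + 1) by apply S_INR.
  assert (/ INR (S (S N)) ^ 2 <= / INR (S N) - / INR (S (S N))).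
  { rewrite H1.
    replace (/ INR (S N) - / (INR (S N) + 1)) with (/ (INR (S N) * (INR (S N) + 1))) by (field; lra).
    apply Rinv_le_contravar; [apply Rmult_lt_0_compat; lra | cbn [pow]; nra]. }
  lra.
Qed.

Lemma inv_sq_sum_le N : sumR (fun n => / INR n ^ 2) N <= 2.
Proof.
  destruct N as [|N]; [simpl; lra|]. assert (H := inv_sq_sum_S N).
  assert (0 < / INR (S N)) by (apply Rinv_0_lt_compat, INR_S_pos). lra.
Qed.

(* Since [e_k(1,...,1/(n-1)) <= n], the terms of [zeta(s,{1}_k)], [s >= 3],
   are dominated by [1/n^2]. *)
Lemma height_one_term_le s k n :
  (3 <= s)%nat -> (1 <= n)%nat -> / INR n ^ s * esym k (n - 1) <= / INR n ^ 2.
Proof.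
  intros Hs Hn. assert (Hn' : 1 <= INR n) by (apply (le_INR 1); auto).
  assert (He := esym_le k (n - 1)). rewrite minus_INR in He by auto. simpl INR in He.
  assert (Hpow : forall i, 0 < INR n ^ i) by (intros; apply pow_lt; lra).
  apply Rle_trans with (/ INR n ^ s * INR n).
  - apply Rmult_le_compat_l; [apply inv_INR_pow_nonneg | lra].
  - replace (/ INR n ^ s * INR n) with (/ INR n ^ (s - 1)).
    + apply Rinv_le_contravar; [apply Hpow | apply Rle_pow; auto; lia].
    + replace s with (S (s - 1)) at 2 by lia. cbn [pow]. field. split; [|lra].
      apply Rgt_not_eq, Hpow.
Qed.

Lemma mzv_height_one_cv s k :
  (3 <= s)%nat -> Un_cv (mzv_trunc (s :: repeat 1%nat k)) (mzv (s :: repeat 1%nat k)).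
Proof.
  intros Hs. destruct (growing_cv (mzv_trunc (s :: repeat 1%nat k))) as [l Hl].
  - apply sumR_growing. intros n.
    apply Rmult_le_pos; [apply inv_INR_pow_nonneg | apply esym_nonneg].
  - apply has_ub_of_le with 2. intros N. rewrite mzv_trunc_height_one.
    eapply Rle_trans; [|apply (inv_sq_sum_le N)].
    apply sumR_le. intros n Hn. apply height_one_term_le; lia.
  - rewrite (mzv_spec _ l Hl). exact Hl.
Qed.

(** Duality [zeta(j+2, {1}_i) = zeta(i+2, {1}_j)], proved by summing the
    nonnegative double series below in both orders: its row sums are the
    terms of [zeta(j+2, {1}_i)] (lemma [beta_series_cv]) and, by the symmetry
    of [beta], its column sums are the terms of [zeta(i+2, {1}_j)]. *)
Definition duality_kernel (i j p q : nat) : R :=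
  esym i (p - 1) / INR p * (esym j (q - 1) * beta p q / INR q).

Lemma duality_kernel_nonneg i j p q : 0 <= duality_kernel i j p q.
Proof.
  unfold duality_kernel.
  apply Rmult_le_pos; apply div_nonneg; try apply pos_INR; try apply esym_nonneg.
  apply Rmult_le_pos; [apply esym_nonneg | left; apply beta_pos].
Qed.

Lemma duality_kernel_swap i j p q : duality_kernel i j p q = duality_kernel j i q p.
Proof. unfold duality_kernel. rewrite (beta_sym p q). unfold Rdiv; ring. Qed.

Lemma duality_kernel_row i j p :
  Un_cv (sumR (duality_kernel i j p)) (/ INR p ^ (j + 2) * esym i (p - 1)).
Proof.
  destruct p as [|p].
  - (* the row [p = 0] vanishes since [/ 0 = 0] *)
    replace (/ INR 0 ^ (j + 2) * esym i (0 - 1)) with 0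
      by (cbn [INR]; rewrite pow_i, Rinv_0 by lia; ring).
    apply Un_cv_ext with (fun _ => 0); [|apply cv_const].
    intros N. rewrite <- (sumR_zero N). apply sumR_ext. intros q _.
    unfold duality_kernel. cbn [INR]. unfold Rdiv at 1. rewrite Rinv_0. ring.
  - replace (/ INR (S p) ^ (j + 2) * esym i (S p - 1))
      with (esym i (S p - 1) / INR (S p) * / INR (S p) ^ S j).
    + apply Un_cv_ext with (fun N => esym i (S p - 1) / INR (S p) * beta_series j (S p) N).
      * intros N. unfold beta_series. rewrite <- sumR_scal. apply sumR_ext. intros q _.
        unfold duality_kernel, Rdiv. ring.
      * apply cv_scal, beta_series_cv. lia.
    + replace (j + 2)%nat with (S (S j)) by lia. cbn [pow]. rewrite !Rinv_mult.
      unfold Rdiv. ring.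
Qed.

Lemma mzv_trunc_duality i j l :
  Un_cv (mzv_trunc ((j + 2)%nat :: repeat 1%nat i)) l ->
  Un_cv (mzv_trunc ((i + 2)%nat :: repeat 1%nat j)) l.
Proof.
  intros H.
  apply (tonelli (duality_kernel i j) (fun p => / INR p ^ (j + 2) * esym i (p - 1))).
  - apply duality_kernel_nonneg.
  - apply duality_kernel_row.
  - intros q. apply Un_cv_ext with (sumR (duality_kernel j i q)).
    + intros N. apply sumR_ext. intros p _. symmetry. apply duality_kernel_swap.
    + apply duality_kernel_row.
  - exact H.
Qed.

Lemma mzv_duality i j : (1 <= j)%nat ->
  mzv ((i + 2)%nat :: repeat 1%nat j) = mzv ((j + 2)%nat :: repeat 1%nat i).
Proof.
  intros Hj. apply mzv_spec, mzv_trunc_duality, mzv_height_one_cv. lia.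
Qed.

Lemma height_one_trunc_sum m L N : (L <= m)%nat ->
  sum_f_R0 (fun k => mzv_trunc ((m - k)%nat :: repeat 1%nat k) N) L =
  sumR (fun n => / INR n ^ m * esym_gen (INR n) (n - 1) L) N.
Proof.
  intros HL. rewrite (sum_eq _ _ _ (fun k _ => mzv_trunc_height_one (m - k) k N)).
  rewrite sum_f_R0_sumR_swap. apply sumR_ext. intros n Hn.
  unfold esym_gen. rewrite <- sum_f_R0_scal. apply sum_eq. intros k Hk.
  assert (0 < INR n) by (apply lt_0_INR; lia).
  replace m with (m - k + k)%nat at 2 by lia. rewrite pow_add, Rinv_mult.
  field. split; apply pow_nonzero; lra.
Qed.

Lemma esym_gen_nonneg x N L : 0 <= x -> 0 <= esym_gen x N L.
Proof.
  intros Hx. apply cond_pos_sum. intros k.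
  apply Rmult_le_pos; [apply pow_le; auto | apply esym_nonneg].
Qed.

Lemma esym_gen_le_pow L n : (1 <= n)%nat -> esym_gen (INR n) (n - 1) L <= INR n ^ S L.
Proof.
  intros Hn. assert (Hn' : 1 <= INR n) by (apply (le_INR 1); auto).
  apply Rle_trans with (INR n ^ L * esym_gen 1 (n - 1) L).
  - unfold esym_gen. rewrite <- sum_f_R0_scal. apply sum_Rle. intros k Hk.
    rewrite pow1, Rmult_1_l. apply Rmult_le_compat_r; [apply esym_nonneg | apply Rle_pow; auto].
  - rewrite <- tech_pow_Rmult, Rmult_comm. apply Rmult_le_compat_r; [apply pow_le; lra|].
    eapply Rle_trans; [apply esym_gen_le; lra|]. rewrite hprod_1, minus_INR by auto.
    simpl; lra.
Qed.

Lemma power_tradeoff x y m L :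
  1 <= y -> y ^ 2 <= x -> (2 * L <= m)%nat -> (L + 3 <= m)%nat -> (6 <= m)%nat ->
  / x ^ m * x ^ S L <= / y ^ m * (y ^ 6 / x ^ 2).
Proof.
  intros Hy Hx H2L HL3 H6. assert (Hx1 : 1 <= x) by nra.
  assert (Hxp : forall i, 0 < x ^ i) by (intros; apply pow_lt; lra).
  assert (Hyp : forall i, 0 < y ^ i) by (intros; apply pow_lt; lra).
  set (a := (m - (L + 3))%nat).
  assert (Exm : x ^ m = x ^ S L * x ^ 2 * x ^ a)
    by (rewrite <- !pow_add; f_equal; unfold a; lia).
  assert (Eym : y ^ m = y ^ 6 * y ^ (m - 6)) by (rewrite <- pow_add; f_equal; lia).
  assert (Hya : y ^ (m - 6) <= x ^ a).
  { apply Rle_trans with (y ^ (2 * a)); [apply Rle_pow; auto; unfold a; lia|].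
    rewrite pow_mult. apply pow_incr. split; [apply pow_le; lra | exact Hx]. }
  rewrite Exm, Eym.
  assert (0 < x ^ S L) by apply Hxp. assert (0 < x ^ 2) by apply Hxp.
  assert (0 < x ^ a) by apply Hxp. assert (0 < y ^ 6) by apply Hyp.
  assert (0 < y ^ (m - 6)) by apply Hyp.
  replace (/ (x ^ S L * x ^ 2 * x ^ a) * x ^ S L) with (/ (x ^ 2 * x ^ a)) by (field; lra).
  replace (/ (y ^ 6 * y ^ (m - 6)) * (y ^ 6 / x ^ 2)) with (/ (x ^ 2 * y ^ (m - 6)))
    by (field; lra).
  apply Rinv_le_contravar; [apply Rmult_lt_0_compat; lra|].
  apply Rmult_le_compat_l; lra.
Qed.

Lemma sumR_cutoff_le (a : nat -> R) r M : (forall n, 0 <= a n) ->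
  sumR (fun n => if (n <? r)%nat then a n else 0) M <= sumR a r.
Proof.
  intros Ha.
  assert (Hpt : forall n, (if (n <? r)%nat then a n else 0) <= a n)
    by (intros n; destruct (n <? r)%nat; [lra | apply Ha]).
  destruct (Nat.le_gt_cases M r) as [HM|HM].
  - apply Rle_trans with (sumR a M); [apply sumR_le; auto | apply sumR_mono; auto].
  - replace M with (r + (M - r))%nat by lia. rewrite sumR_split.
    assert (Htail : sumR (fun i => if (r + i <? r)%nat then a (r + i)%nat else 0) (M - r) = 0).
    { transitivity (sumR (fun _ => 0) (M - r)); [apply sumR_ext | apply sumR_zero]. intros i Hi.
      replace (r + i <? r)%nat with false; [reflexivity|]. symmetry; apply Nat.ltb_ge; lia. }
    rewrite Htail, Rplus_0_r. apply sumR_le; auto.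
Qed.

(** The leading part of the asymptotics, [sum_(n<=K) hprod n (n-1) / n^m]
    (which is half of [sum_(n<=K) binom(2n,n)/n^m]), and the constant of the
    error term. *)
Definition central_sum (m K : nat) : R :=
  sumR (fun n => / INR n ^ m * hprod (INR n) (n - 1)) K.

Definition error_const (K : nat) : R :=
  sumR (fun n => hprod (INR n) (n - 1)) ((K + 1) ^ 2) + 2 * INR (K + 1) ^ 6.

(* A summable majorant of the terms [n > K], after factoring out [(K+1)^-m]:
   the small [n] are handled by the bound [esym_gen <= hprod], the large ones
   by [power_tradeoff]. *)
Definition tail_majorant (K n : nat) : R :=
  (if (n <? (K + 1) ^ 2)%nat then hprod (INR n) (n - 1) else 0) + INR (K + 1) ^ 6 * / INR n ^ 2.

Lemma tail_majorant_nonneg K n : 0 <= tail_majorant K n.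
Proof.
  unfold tail_majorant.
  assert (0 <= INR (K + 1) ^ 6 * / INR n ^ 2)
    by (apply Rmult_le_pos; [apply pow_le, pos_INR | apply inv_INR_pow_nonneg]).
  destruct (n <? (K + 1) ^ 2)%nat; [|lra].
  assert (0 <= hprod (INR n) (n - 1)) by (apply hprod_nonneg, pos_INR). lra.
Qed.

Lemma tail_majorant_sum_le K M : sumR (tail_majorant K) M <= error_const K.
Proof.
  unfold tail_majorant, error_const. rewrite sumR_plus, sumR_scal.
  apply Rplus_le_compat.
  - apply sumR_cutoff_le. intros; apply hprod_nonneg, pos_INR.
  - rewrite Rmult_comm. apply Rmult_le_compat_r; [apply pow_le, pos_INR | apply inv_sq_sum_le].
Qed.

Definition height_one_partial (m L : nat) : R :=
  sum_f_R0 (fun k => mzv ((m - k)%nat :: repeat 1%nat k)) L.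

Section PartialHeightOneSum.
Variables m L K : nat.
Hypothesis K_le_L : (K <= L)%nat.
Hypothesis L_le_half : (2 * L <= m)%nat.
Hypothesis m_ge_L3 : (L + 3 <= m)%nat.
Hypothesis m_ge_6 : (6 <= m)%nat.

Let term (n : nat) : R := / INR n ^ m * esym_gen (INR n) (n - 1) L.

Lemma term_nonneg n : 0 <= term n.
Proof. apply Rmult_le_pos; [apply inv_INR_pow_nonneg | apply esym_gen_nonneg, pos_INR]. Qed.

Lemma partial_sum_cv : Un_cv (sumR term) (height_one_partial m L).
Proof.
  apply Un_cv_ext with (fun N => sum_f_R0 (fun k => mzv_trunc ((m - k)%nat :: repeat 1%nat k) N) L).
  - intros N. apply height_one_trunc_sum. lia.
  - apply cv_sum_f_R0_finite. intros k Hk. apply mzv_height_one_cv. lia.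
Qed.

Lemma head_sum : sumR term K = central_sum m K.
Proof.
  apply sumR_ext. intros n Hn. unfold term. rewrite esym_gen_full; [reflexivity | lia].
Qed.

Lemma tail_term_le n : (K + 1 <= n)%nat -> term n <= / INR (K + 1) ^ m * tail_majorant K n.
Proof.
  intros Hn. set (y := INR (K + 1)).
  assert (Hy : 1 <= y) by (apply (le_INR 1); lia).
  assert (Hyn : y <= INR n) by (apply le_INR; lia).
  assert (Hinv : / INR n ^ m <= / y ^ m)
    by (apply Rinv_le_contravar; [apply pow_lt; lra | apply pow_incr; lra]).
  assert (H6 : 0 <= y ^ 6 * / INR n ^ 2)
    by (apply Rmult_le_pos; [apply pow_le; lra | apply inv_INR_pow_nonneg]).
  assert (Hy0 : 0 <= / y ^ m) by (apply inv_nonneg, pow_le; lra).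
  unfold term, tail_majorant. fold y. destruct (n <? (K + 1) ^ 2)%nat eqn:E.
  - assert (0 <= hprod (INR n) (n - 1)) by (apply hprod_nonneg, pos_INR).
    apply Rle_trans with (/ y ^ m * hprod (INR n) (n - 1)); [|apply Rmult_le_compat_l; lra].
    apply Rle_trans with (/ INR n ^ m * hprod (INR n) (n - 1)).
    + apply Rmult_le_compat_l; [apply inv_INR_pow_nonneg | apply esym_gen_le, pos_INR].
    + apply Rmult_le_compat_r; auto.
  - apply Nat.ltb_ge in E. rewrite Rplus_0_l.
    apply Rle_trans with (/ INR n ^ m * INR n ^ S L).
    + apply Rmult_le_compat_l; [apply inv_INR_pow_nonneg | apply esym_gen_le_pow; lia].
    + apply power_tradeoff; auto. unfold y. rewrite <- pow_INR. apply le_INR. exact E.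
Qed.

Lemma partial_height_one_estimate :
  central_sum m K <= height_one_partial m L <= central_sum m K + error_const K * / INR (K + 1) ^ m.
Proof.
  assert (Hcv := partial_sum_cv). split.
  - apply lim_ge_eventually with (sumR term) K; auto. intros N HN.
    replace N with (K + (N - K))%nat by lia. rewrite sumR_split, head_sum.
    assert (0 <= sumR (fun i => term (K + i)%nat) (N - K)) by (apply sumR_nonneg; intros; apply term_nonneg).
    lra.
  - apply lim_le with (sumR term); auto. intros N.
    apply Rle_trans with (sumR term (K + N)); [apply sumR_mono; [apply term_nonneg | lia]|].
    rewrite sumR_split, head_sum. apply Rplus_le_compat_l.
    apply Rle_trans with (/ INR (K + 1) ^ m * sumR (fun i => tail_majorant K (K + i)) N).
    + rewrite <- sumR_scal. apply sumR_le. intros i Hi. apply tail_term_le. lia.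
    + rewrite Rmult_comm. apply Rmult_le_compat_r; [apply inv_INR_pow_nonneg|].
      apply Rle_trans with (sumR (tail_majorant K) (K + N)); [|apply tail_majorant_sum_le].
      rewrite sumR_split.
      assert (0 <= sumR (tail_majorant K) K) by (apply sumR_nonneg; intros; apply tail_majorant_nonneg).
      lra.
Qed.

End PartialHeightOneSum.

(** By duality the terms [k > m/2] of
    [sum_(k<=m-2) zeta(m-k, {1}_k)] repeat those with [k < m/2], so the full
    sum is the sum of two partial sums [height_one_partial m L] with [L]
    about [m/2]; each of them obeys [partial_height_one_estimate]. *)

Lemma sum_f_R0_rev (f : nat -> R) n : sum_f_R0 (fun j => f (n - j)%nat) n = sum_f_R0 f n.
Proof.
  revert f; induction n as [|n IH]; intros f; [reflexivity|].
  rewrite tech5, Nat.sub_diag, (decomp_sum f (S n)) by lia. simpl pred.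
  rewrite <- (IH (fun i => f (S i))), Rplus_comm. f_equal.
  apply sum_eq. intros j Hj. f_equal. lia.
Qed.

Lemma height_one_sum_halves m a b : (m - 2 = a + S b)%nat ->
  mzv_height_one_sum m = height_one_partial m a + height_one_partial m b.
Proof.
  intros Hm. unfold mzv_height_one_sum, height_one_partial. rewrite Hm.
  rewrite (tech2 _ a (a + S b)) by lia. f_equal.
  replace (a + S b - S a)%nat with b by lia. rewrite <- sum_f_R0_rev.
  apply sum_eq. intros j Hj.
  replace (m - (S a + (b - j)))%nat with (j + 2)%nat by lia.
  rewrite mzv_duality by lia.
  replace (S a + (b - j) + 2)%nat with (m - j)%nat by lia. reflexivity.
Qed.

Lemma height_one_sum_estimate K m : (1 <= K)%nat -> (2 * K + 6 <= m)%nat ->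
  Rabs (mzv_height_one_sum m - 2 * central_sum m K) <= 2 * error_const K * / INR (K + 1) ^ m.
Proof.
  intros HK Hm.
  destruct (Nat.Even_or_Odd m) as [[h Hh]|[h Hh]];
    rewrite (height_one_sum_halves m (h - 1) (m - 2 - h)) by lia;
    assert (E1 := partial_height_one_estimate m (h - 1) K ltac:(lia) ltac:(lia) ltac:(lia) ltac:(lia));
    assert (E2 := partial_height_one_estimate m (m - 2 - h) K ltac:(lia) ltac:(lia) ltac:(lia) ltac:(lia));
    apply Rabs_le; lra.
Qed.

Lemma sum_f_R0_as_sumR (g : nat -> R) K :
  (1 <= K)%nat -> sum_f_R0 (fun i => g (S i)) (K - 1) = sumR g K.
Proof.
  intros HK. destruct K as [|K]; [lia|]. rewrite Nat.sub_succ, Nat.sub_0_r.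
  clear HK; induction K as [|K IH]; [simpl; ring|]. rewrite tech5, IH. reflexivity.
Qed.

Lemma central_binomial_sum m K : (1 <= K)%nat ->
  sum_f_R0 (fun i => C (2 * (i + 1)) (i + 1) / INR (i + 1) ^ m) (K - 1) = 2 * central_sum m K.
Proof.
  intros HK.
  transitivity (sumR (fun n => C (2 * n) n / INR n ^ m) K).
  { rewrite <- sum_f_R0_as_sumR by exact HK.
    apply sum_eq. intros i _. rewrite Nat.add_1_r. reflexivity. }
  unfold central_sum. rewrite <- sumR_scal. apply sumR_ext. intros n Hn.
  rewrite <- hprod_central_binomial by lia. unfold Rdiv. ring.
Qed.

(* With [K = 1]: [|S_m - 2| <= 2 error_const 1 / 2^m]. *)
Lemma mzv_height_one_sum_cv : Un_cv mzv_height_one_sum 2.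
Proof.
  intros eps Heps. destruct (cv_pow_half (2 * error_const 1) eps Heps) as [N HN].
  exists (Nat.max N 8). intros m Hm. unfold Rdist.
  assert (H := height_one_sum_estimate 1 m ltac:(lia) ltac:(lia)).
  replace (central_sum m 1) with 1 in H by (unfold central_sum; simpl; rewrite pow1; field).
  replace (INR (1 + 1)) with 2 in H by (simpl; ring).
  specialize (HN m ltac:(lia)). unfold Rdist in HN. rewrite Rminus_0_r in HN.
  rewrite Rmult_1_r in H. eapply Rle_lt_trans; [exact H|].
  eapply Rle_lt_trans; [apply Rle_abs | exact HN].
Qed.

Lemma inv_pred_cv : Un_cv (fun m => / INR (m - 1)) 0.
Proof.
  apply cv_infty_cv_0. intros M. destruct (INR_unbounded M) as [N HN].
  exists (S N). intros n Hn. apply Rlt_le_trans with (INR N); [lra | apply le_INR; lia].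
Qed.

Theorem corollary4 :
  (forall K : nat, (1 <= K)%nat ->
     exists (B : R) (M : nat), forall m : nat, (M <= m)%nat ->
       Rabs (mzv_height_one_sum m
             - sum_f_R0 (fun i => C (2 * (i + 1)) (i + 1) / (INR (i + 1)) ^ m) (K - 1))
       <= B * / (INR (K + 1)) ^ m)
  /\
  Un_cv (fun m => (mzv_height_one_sum m / INR (m - 1)) / (2 / INR m)) 1.
Proof.
  split.
  - intros K HK. exists (2 * error_const K), (2 * K + 6)%nat. intros m Hm.
    rewrite central_binomial_sum by exact HK. apply height_one_sum_estimate; assumption.
  -
    apply cv_eventually_eq with (fun m => (/ 2 * mzv_height_one_sum m) * (1 + / INR (m - 1))) 2%nat.
    + replace 1 with ((/ 2 * 2) * (1 + 0)) at 1 by field.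
      apply CV_mult; [apply cv_scal, mzv_height_one_sum_cv |].
      apply CV_plus; [apply cv_const | apply inv_pred_cv].
    + intros m Hm. assert (1 <= INR (m - 1)) by (apply (le_INR 1); lia).
      replace (INR m) with (INR (m - 1) + 1) by (rewrite <- S_INR; f_equal; lia).
      field. lra.
Qed.
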